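(* Let $0\le\lambda<\gamma\le\delta$ and let $\mathfrak{f}=\mathfrak{s}+\overline{\mathfrak{t}}\in\mathcal{H}^0$ with $\mathfrak{s}(z)=z+\sum_{m\ge2}a_mz^m$, $\mathfrak{t}(z)=\sum_{m\ge2}b_mz^m$. If $$\sum_{m=2}^\infty m^2[2\gamma+(\delta-\gamma)(m-1)](|a_m|+|b_m|)\le2(\gamma-\lambda),$$ then $\mathfrak{f}\in\mathcal{R}_H^0(\gamma,\delta,\lambda)$.
   Context: Let $\mathcal{U}=\{z\in\mathbb{C}:|z|<1\}$. $\mathcal{H}^0$ denotes the class of complex-valued harmonic functions $\mathfrak{f}=\mathfrak{s}+\overline{\mathfrak{t}}$ on $\mathcal{U}$, where $\mathfrak{s}(z)=z+\sum_{m\ge2}a_mz^m$ and $\mathfrak{t}(z)=\sum_{m\ge2}b_mz^m$ are analytic in $\mathcal{U}$. For real $0\le\lambda<\gamma\le\delta$, $\mathcal{R}_H^0(\gamma,\delta,\lambda)$ is the class of $\mathfrak{f}=\mathfrak{s}+\overline{\mathfrak{t}}\in\mathcal{H}^0$ such that for all $z\in\mathcal{U}$, $\mathrm{Re}\left[\gamma\mathfrak{s}'(z)+\delta z\mathfrak{s}''(z)+\frac{\delta-\gamma}{2}z^2\mathfrak{s}'''(z)-\lambda\right]>\left|\gamma\mathfrak{t}'(z)+\delta z\mathfrak{t}''(z)+\frac{\delta-\gamma}{2}z^2\mathfrak{t}'''(z)\right|$. *)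

From Stdlib Require Import Reals.
From Coquelicot Require Import Coquelicot.
Open Scope R_scope.

Definition in_U (z : C) : Prop := Cmod z < 1.

Definition normalized_s (a : nat -> C) (s : C -> C) : Prop :=
  a 0%nat = 0%C /\ a 1%nat = 1%C /\
  forall z : C, in_U z -> is_pseries a z (s z).

Definition normalized_t (b : nat -> C) (t : C -> C) : Prop :=
  b 0%nat = 0%C /\ b 1%nat = 0%C /\
  forall z : C, in_U z -> is_pseries b z (t z).

Definition Lop (gamma delta : R) (g1 g2 g3 : C -> C) (z : C) : C :=
  (RtoC gamma * g1 z + RtoC delta * z * g2 z
   + RtoC ((delta - gamma) / 2) * (z * z) * g3 z)%C.

Definition derivs3_on_U (g g1 g2 g3 : C -> C) : Prop :=
  forall z : C, in_U z ->
    is_derive g z (g1 z) /\ is_derive g1 z (g2 z) /\ is_derive g2 z (g3 z).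

(* f = s + conj t belongs to R_H^0(gamma, delta, lambda)
   (membership in H^0 is expressed separately by normalized_s/normalized_t). *)
Definition in_RH0 (gamma delta lambda : R) (s t : C -> C) : Prop :=
  exists s1 s2 s3 t1 t2 t3 : C -> C,
    derivs3_on_U s s1 s2 s3 /\ derivs3_on_U t t1 t2 t3 /\
    forall z : C, in_U z ->
      Re (Lop gamma delta s1 s2 s3 z) - lambda
        > Cmod (Lop gamma delta t1 t2 t3 z).

From Stdlib Require Import Reals Lra Lia.
From Coquelicot Require Import Coquelicot.
Open Scope R_scope.

(* The operator L = gamma D + delta z D^2 + (delta - gamma)/2 z^2 D^3 acts diagonally on
   power series: if s(z) = sum a_m z^m then L[s](z) = sum_(m >= 1) (w_m / 2) a_m z^(m-1),
   where w_m = m^2 (2 gamma + (delta - gamma)(m - 1)) is exactly the weight of the hypothesis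
   and w_1 / 2 = gamma.  Hence for |z| < 1
     |L[s](z) - gamma| + |L[t](z)| <= |z| sum_(m >= 2) w_m (|a_m| + |b_m|) / 2 < gamma - lambda,
   which gives Re L[s](z) - lambda > |L[t](z)|.  The hypothesis also bounds the coefficients,
   and bounded coefficients are what make termwise differentiation of the series legitimate. *)

Lemma is_series_nonneg_term_le (u : nat -> R) (l : R) :
  (forall n, 0 <= u n) -> is_series u l -> forall n, u n <= l.
Proof.
  intros Hu Hl n.
  assert (Hpart : forall k, 0 <= sum_n u k /\ u k <= sum_n u k).
  { induction k as [|k [IH _]]; [rewrite sum_O; split; [apply Hu | lra]|].
    rewrite sum_Sn. change plus with Rplus. specialize (Hu (S k)). lra. }
  eapply Rle_trans; [apply Hpart|].
  apply (is_lim_seq_incr_compare _ _ Hl).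
  intro k. rewrite sum_Sn. change plus with Rplus. specialize (Hu (S k)). lra.
Qed.

Lemma is_lim_seq_norm_sum_n {K : AbsRing} {V : NormedModule K} (a : nat -> V) (l : V) :
  is_series a l -> is_lim_seq (fun N => norm (sum_n a N)) (norm l).
Proof. intro Ha. exact (filterlim_comp _ _ _ _ norm _ _ _ Ha (filterlim_norm l)). Qed.

Lemma is_series_norm_le {K : AbsRing} {V : NormedModule K}
    (a : nat -> V) (c : nat -> R) (la : V) (lc : R) :
  is_series a la -> is_series c lc -> (forall n, norm (a n) <= c n) ->
  norm la <= lc.
Proof.
  intros Ha Hc Hac.
  refine (is_lim_seq_le _ _ _ _ _ (is_lim_seq_norm_sum_n a la Ha) (Hc : is_lim_seq (sum_n c) lc)).
  intro N. eapply Rle_trans; [apply norm_sum_n_m | apply sum_n_m_le, Hac].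
Qed.

Lemma is_series_norm_plus_le {K : AbsRing} {V : NormedModule K}
    (a b : nat -> V) (c : nat -> R) (la lb : V) (lc : R) :
  is_series a la -> is_series b lb -> is_series c lc ->
  (forall n, norm (a n) + norm (b n) <= c n) -> norm la + norm lb <= lc.
Proof.
  intros Ha Hb Hc Habc.
  refine (is_lim_seq_le _ _ _ _ _
           (is_lim_seq_plus' _ _ _ _ (is_lim_seq_norm_sum_n a la Ha)
              (is_lim_seq_norm_sum_n b lb Hb)) (Hc : is_lim_seq (sum_n c) lc)).
  intro N. apply Rle_trans with (sum_n (fun n => norm (a n) + norm (b n)) N).
  - unfold sum_n. rewrite (sum_n_m_plus (G := R_AbelianMonoid)).
    apply Rplus_le_compat; apply norm_sum_n_m.
  - apply sum_n_m_le, Habc.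
Qed.

Lemma is_lim_seq_succ_ratio : is_lim_seq (fun n => INR (S (S n)) / INR (S n)) 1.
Proof.
  apply is_lim_seq_ext with (fun n => 1 + / INR (S n)).
  { intro n. rewrite (S_INR (S n)). field. apply not_0_INR. lia. }
  assert (Hinv : is_lim_seq (fun n => / INR (S n)) 0).
  { apply (is_lim_seq_inv _ p_infty); [| discriminate].
    apply (is_lim_seq_incr_1 INR p_infty), is_lim_seq_INR. }
  generalize (is_lim_seq_plus' _ _ 1 0 (is_lim_seq_const 1) Hinv).
  now rewrite Rplus_0_r.
Qed.

Lemma ex_series_pow_mul_geom (k : nat) (r : R) :
  0 <= r < 1 -> ex_series (fun n => INR (S n) ^ k * r ^ n).
Proof.
  intro Hr.
  assert (Hpos : forall n, 0 < INR (S n) ^ k) by (intro n; apply pow_lt, lt_0_INR; lia).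
  assert (Hdisk : CV_disk (fun n => INR (S n) ^ k) r).
  { apply (CV_disk_DAlembert _ r 1).
    - intro n. specialize (Hpos n). lra.
    - apply is_lim_seq_ext with (fun n => (INR (S (S n)) / INR (S n)) ^ k).
      { intro n. unfold Rdiv. rewrite Rpow_mult_distr, pow_inv.
        symmetry; apply Rabs_pos_eq, Rlt_le, Rdiv_lt_0_compat; apply Hpos. }
      rewrite <- (pow1 k).
      apply (is_lim_seq_continuous (fun x => x ^ k)), is_lim_seq_succ_ratio.
      apply derivable_continuous_pt, derivable_pt_pow.
    - right. rewrite Rinv_1, Rabs_pos_eq; lra. }
  refine (ex_series_ext _ _ _ Hdisk). intro n.
  apply Rabs_pos_eq, Rmult_le_pos; [apply Rlt_le, Hpos | apply pow_le; lra].
Qed.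

(* Junk value (an arbitrary point) when the series diverges. *)
Definition CPSeries (a : nat -> C) (z : C) : C :=
  @iota C_CompleteNormedModule (is_pseries a z).

Lemma CPSeries_unique (a : nat -> C) (z l : C) : is_pseries a z l -> CPSeries a z = l.
Proof. exact (iota_filterlim_locally _ l). Qed.

Definition CPS_derive (a : nat -> C) (n : nat) : C := (INR (S n) * a (S n))%C.

Definition poly_bounded (a : nat -> C) (M : R) (p : nat) : Prop :=
  forall n, Cmod (a n) <= M * INR (S n) ^ p.

Lemma poly_bounded_nonneg (a : nat -> C) (M : R) (p : nat) :
  poly_bounded a M p -> 0 <= M.
Proof.
  intro Ha. specialize (Ha O). rewrite pow1, Rmult_1_r in Ha.
  exact (Rle_trans _ _ _ (Cmod_ge_0 _) Ha).
Qed.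

Lemma poly_bounded_shift (a : nat -> C) (M : R) (p : nat) :
  poly_bounded a M p -> poly_bounded (fun n => a (S n)) (M * 2 ^ p) p.
Proof.
  intros Ha n. eapply Rle_trans; [apply Ha|].
  rewrite Rmult_assoc, <- Rpow_mult_distr.
  apply Rmult_le_compat_l; [exact (poly_bounded_nonneg a M p Ha)|].
  apply pow_incr. rewrite !S_INR. generalize (pos_INR n). lra.
Qed.

Lemma poly_bounded_CPS_derive (a : nat -> C) (M : R) (p : nat) :
  poly_bounded a M p -> poly_bounded (CPS_derive a) (M * 2 ^ p) (S p).
Proof.
  intros Ha n. unfold CPS_derive.
  rewrite Cmod_mult, Cmod_R, Rabs_pos_eq by apply pos_INR.
  rewrite <- tech_pow_Rmult.
  replace (M * 2 ^ p * (INR (S n) * INR (S n) ^ p))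
    with (INR (S n) * (M * 2 ^ p * INR (S n) ^ p)) by ring.
  apply Rmult_le_compat_l; [apply pos_INR | apply (poly_bounded_shift a M p Ha)].
Qed.

Lemma Cmod_pow_n (z : C) (n : nat) : Cmod (pow_n z n) = Cmod z ^ n.
Proof. exact (Cmod_pow z n). Qed.

Lemma is_pseries_CPSeries (a : nat -> C) (M : R) (p : nat) (z : C) :
  poly_bounded a M p -> Cmod z < 1 -> is_pseries a z (CPSeries a z).
Proof.
  intros Ha Hz.
  assert (Hex : ex_pseries a z).
  { apply (ex_series_le (V := C_CompleteNormedModule) _
             (fun n => M * (INR (S n) ^ p * Cmod z ^ n))).
    - intro n. change (Cmod (pow_n z n * a n)%C <= M * (INR (S n) ^ p * Cmod z ^ n)).
      rewrite Cmod_mult, Cmod_pow_n, Rmult_comm, <- Rmult_assoc.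
      apply Rmult_le_compat_r; [apply pow_le, Cmod_ge_0 | apply Ha].
    - apply (ex_series_scal_l (V := R_NormedModule)), ex_series_pow_mul_geom.
      split; [apply Cmod_ge_0 | exact Hz]. }
  destruct Hex as [l Hl]. now rewrite (CPSeries_unique a z l Hl).
Qed.

Lemma pow_n_S (z : C) (n : nat) : pow_n z (S n) = (z * pow_n z n)%C.
Proof. reflexivity. Qed.

Definition pow_remainder (n : nat) (u z : C) : C :=
  (pow_n u (S n) - pow_n z (S n) - INR (S n) * pow_n z n * (u - z))%C.

Lemma pow_remainder_S (n : nat) (u z : C) :
  pow_remainder (S n) u z
  = (u * pow_remainder n u z + INR (S n) * pow_n z n * ((u - z) * (u - z)))%C.
Proof. unfold pow_remainder. rewrite !pow_n_S, (S_INR (S n)), RtoC_plus. ring. Qed.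

(* The factor [r] on the left avoids the exponent [n - 1] on the right. *)
Lemma Cmod_pow_remainder_le (r : R) (u z : C) (n : nat) :
  Cmod u <= r -> Cmod z <= r ->
  r * Cmod (pow_remainder n u z) <= INR (S n) ^ 2 * r ^ n * Cmod (u - z) ^ 2.
Proof.
  intros Hu Hz.
  assert (Hr : 0 <= r) by (eapply Rle_trans; [apply Cmod_ge_0 | exact Hu]).
  set (d := Cmod (u - z)).
  assert (Hd : 0 <= d) by apply Cmod_ge_0.
  induction n as [|n IH].
  - replace (pow_remainder 0 u z) with (RtoC 0)
      by (unfold pow_remainder; rewrite !pow_n_S; simpl; ring).
    rewrite Cmod_0, Rmult_0_r. apply Rmult_le_pos; [nra | apply pow_le, Hd].
  - rewrite pow_remainder_S.
    assert (Hzn : Cmod z ^ n <= r ^ n) by (apply pow_incr; split; [apply Cmod_ge_0 | exact Hz]).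
    assert (Hrn : 0 <= r ^ n) by (apply pow_le, Hr).
    assert (Htri : Cmod (u * pow_remainder n u z + INR (S n) * pow_n z n * ((u - z) * (u - z)))%C
                   <= r * Cmod (pow_remainder n u z) + INR (S n) * r ^ n * d ^ 2).
    { eapply Rle_trans; [apply Cmod_triangle|].
      rewrite !Cmod_mult, Cmod_R, Rabs_pos_eq, Cmod_pow_n by apply pos_INR.
      apply Rplus_le_compat.
      - apply Rmult_le_compat_r; [apply Cmod_ge_0 | exact Hu].
      - fold d. assert (0 <= INR (S n)) by apply pos_INR.
        replace (d ^ 2) with (d * d) by ring.
        apply Rmult_le_compat_r; [nra|]. apply Rmult_le_compat_l; assumption. }
    apply Rle_trans with (r * (r * Cmod (pow_remainder n u z) + INR (S n) * r ^ n * d ^ 2)).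
    { apply Rmult_le_compat_l; assumption. }
    rewrite !S_INR in *. simpl pow.
    assert (0 <= INR n) by apply pos_INR.
    assert (0 <= r * r ^ n * (d * d)) by (apply Rmult_le_pos; [apply Rmult_le_pos|]; nra).
    simpl pow in IH. nra.
Qed.

Lemma is_series_tail_pseries (a : nat -> C) (z l : C) :
  is_pseries a z l -> is_series (fun n => pow_n z (S n) * a (S n))%C (l - a O)%C.
Proof.
  intro H. apply (is_series_incr_1 (fun n => scal (pow_n z n) (a n))).
  change (is_series (fun n => scal (pow_n z n) (a n)) ((l - a O) + 1 * a O)%C).
  replace ((l - a O) + 1 * a O)%C with l by ring. exact H.
Qed.

Lemma is_series_pow_remainder (a : nat -> C) (u z lu lz ld : C) :
  is_pseries a u lu -> is_pseries a z lz -> is_pseries (CPS_derive a) z ld ->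
  is_series (fun n => a (S n) * pow_remainder n u z)%C (lu - lz - (u - z) * ld)%C.
Proof.
  intros Hu Hz Hd.
  assert (H := is_series_minus _ _ _ _
                 (is_series_minus _ _ _ _ (is_series_tail_pseries a u lu Hu)
                    (is_series_tail_pseries a z lz Hz))
                 (is_series_scal_l (u - z)%C _ _ Hd)).
  replace (lu - lz - (u - z) * ld)%C
    with (minus (minus (lu - a O) (lz - a O)) (scal (u - z) ld))%C
    by (change ((lu - a O) + - (lz - a O) + - ((u - z) * ld) = lu - lz - (u - z) * ld)%C; ring).
  refine (is_series_ext _ _ _ _ H). intro n.
  change (pow_n u (S n) * a (S n) + - (pow_n z (S n) * a (S n))
          + - ((u - z) * (pow_n z n * CPS_derive a n)) = a (S n) * pow_remainder n u z)%C.
  unfold pow_remainder, CPS_derive. ring.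
Qed.

Lemma CPSeries_remainder_le (a : nat -> C) (M : R) (p : nat) (r : R) :
  poly_bounded a M p -> 0 < r < 1 ->
  exists K, forall u z, Cmod u <= r -> Cmod z <= r ->
    Cmod (CPSeries a u - CPSeries a z - (u - z) * CPSeries (CPS_derive a) z)%C
    <= K * Cmod (u - z) ^ 2.
Proof.
  intros Ha Hr.
  destruct (ex_series_pow_mul_geom (p + 2) r ltac:(lra)) as [L HL].
  exists (M * 2 ^ p * L / r). intros u z Hu Hz.
  set (d := Cmod (u - z)).
  assert (Hrem := is_series_pow_remainder a u z _ _ _
                    (is_pseries_CPSeries a M p u Ha ltac:(lra))
                    (is_pseries_CPSeries a M p z Ha ltac:(lra))
                    (is_pseries_CPSeries (CPS_derive a) _ _ z
                       (poly_bounded_CPS_derive a M p Ha) ltac:(lra))).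
  replace (M * 2 ^ p * L / r * d ^ 2) with (L * (M * 2 ^ p * d ^ 2 / r)) by (field; lra).
  apply (is_series_norm_le _ _ _ _ Hrem (is_series_scal_r _ _ _ HL)).
  intro n. change norm with Cmod. rewrite Cmod_mult.
  assert (Hshift := poly_bounded_shift a M p Ha n).
  assert (Hpow := Cmod_pow_remainder_le r u z n Hu Hz). fold d in Hpow.
  apply Rle_trans with ((M * 2 ^ p * INR (S n) ^ p) * (INR (S n) ^ 2 * r ^ n * d ^ 2 / r)).
  - apply Rmult_le_compat; [apply Cmod_ge_0 | apply Cmod_ge_0 | exact Hshift |].
    apply (Rmult_le_reg_l r); [lra|].
    replace (r * (INR (S n) ^ 2 * r ^ n * d ^ 2 / r)) with (INR (S n) ^ 2 * r ^ n * d ^ 2)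
      by (field; lra).
    exact Hpow.
  - rewrite pow_add. apply Req_le. field. lra.
Qed.

Lemma is_derive_of_quadratic_remainder (f : C -> C) (z l : C) (K delta : R) :
  0 < delta ->
  (forall u, Cmod (u - z) < delta ->
     Cmod (f u - f z - (u - z) * l)%C <= K * Cmod (u - z) ^ 2) ->
  is_derive f z l.
Proof.
  intros Hdelta Hf. split; [apply is_linear_scal_l|].
  intros x Hx. apply (@is_filter_lim_locally_unique C_AbsRing (AbsRing_NormedModule C_AbsRing)) in Hx.
  subst x. intro eps.
  assert (HK1 : 0 < Rabs K + 1) by (generalize (Rabs_pos K); lra).
  assert (Heps : 0 < Rmin delta (eps / (Rabs K + 1))).
  { apply Rmin_pos; [exact Hdelta|]. apply Rdiv_lt_0_compat; [apply cond_pos | exact HK1]. }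
  apply (@locally_norm_le_locally C_AbsRing (AbsRing_NormedModule C_AbsRing) z).
  exists (mkposreal _ Heps). intros u Hu.
  change (Cmod (u - z) < Rmin delta (eps / (Rabs K + 1))) in Hu.
  change (Cmod (f u - f z - (u - z) * l)%C <= eps * Cmod (u - z)).
  eapply Rle_trans; [apply (Hf u), (Rlt_le_trans _ _ _ Hu (Rmin_l _ _))|].
  set (d := Cmod (u - z)) in *.
  assert (Hd : 0 <= d) by apply Cmod_ge_0.
  assert (HdK : (Rabs K + 1) * d <= eps).
  { assert (H := Rlt_le_trans _ _ _ Hu (Rmin_r _ _)).
    apply (Rmult_lt_compat_l (Rabs K + 1)) in H; [| exact HK1].
    replace ((Rabs K + 1) * (eps / (Rabs K + 1))) with (pos eps) in H by (field; lra).
    lra. }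
  assert (K * d ^ 2 <= Rabs K * d * d) by (generalize (Rle_abs K); nra).
  assert (Rabs K * d * d <= eps * d) by nra.
  lra.
Qed.

Lemma is_derive_CPSeries (a : nat -> C) (M : R) (p : nat) (z : C) :
  poly_bounded a M p -> Cmod z < 1 ->
  is_derive (CPSeries a) z (CPSeries (CPS_derive a) z).
Proof.
  intros Ha Hz.
  assert (Hz0 := Cmod_ge_0 z).
  set (r := (1 + Cmod z) / 2).
  destruct (CPSeries_remainder_le a M p r Ha ltac:(unfold r; lra)) as [K HK].
  apply (is_derive_of_quadratic_remainder _ _ _ K (r - Cmod z)); [unfold r; lra|].
  intros u Hu. apply HK; [| unfold r; lra].
  replace u with ((u - z) + z)%C by ring.
  eapply Rle_trans; [apply Cmod_triangle | lra].
Qed.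

Definition Lweight (gamma delta m : R) : R :=
  m ^ 2 * (2 * gamma + (delta - gamma) * (m - 1)).

(* The coefficient of z^n collects gamma m + delta m (m - 1) + (delta - gamma)/2 m (m - 1) (m - 2)
   times a_m, for m = n + 1; this polynomial in m equals [Lweight gamma delta m / 2]. *)
Lemma is_pseries_Lop (gamma delta : R) (a : nat -> C) (M : R) (p : nat) (z : C) :
  poly_bounded a M p -> Cmod z < 1 ->
  is_pseries (fun n => RtoC (Lweight gamma delta (INR (S n)) / 2) * a (S n))%C z
    (Lop gamma delta (CPSeries (CPS_derive a)) (CPSeries (CPS_derive (CPS_derive a)))
       (CPSeries (CPS_derive (CPS_derive (CPS_derive a)))) z).
Proof.
  intros Ha Hz.
  set (a1 := CPS_derive a). set (a2 := CPS_derive a1). set (a3 := CPS_derive a2).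
  assert (B1 := poly_bounded_CPS_derive a M p Ha).
  assert (B2 := poly_bounded_CPS_derive a1 _ _ B1).
  assert (B3 := poly_bounded_CPS_derive a2 _ _ B2).
  assert (Hcomm : forall c : C, mult z c = mult c z) by (intro; apply Cmult_comm).
  assert (H := is_pseries_plus _ _ _ _ _
    (is_pseries_plus _ _ _ _ _
       (is_pseries_scal (RtoC gamma) _ _ _ (Hcomm _) (is_pseries_CPSeries a1 _ _ z B1 Hz))
       (is_pseries_scal (RtoC delta) _ _ _ (Hcomm _)
          (is_pseries_incr_1 _ _ _ (is_pseries_CPSeries a2 _ _ z B2 Hz))))
    (is_pseries_scal (RtoC ((delta - gamma) / 2)) _ _ _ (Hcomm _)
       (is_pseries_incr_1 _ _ _ (is_pseries_incr_1 _ _ _ (is_pseries_CPSeries a3 _ _ z B3 Hz))))).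
  unfold Lop. match type of H with is_pseries _ _ ?l => replace (_ + _)%C with l end.
  2:{ change (gamma * CPSeries a1 z + delta * (z * CPSeries a2 z)
              + RtoC ((delta - gamma) / 2) * (z * (z * CPSeries a3 z))
              = gamma * CPSeries a1 z + delta * z * CPSeries a2 z
              + RtoC ((delta - gamma) / 2) * (z * z) * CPSeries a3 z)%C. ring. }
  refine (is_pseries_ext _ _ _ _ _ H). intro n.
  unfold PS_plus, PS_scal, PS_incr_1, a3, a2, a1, CPS_derive, Lweight.
  destruct n as [|[|n]]; change zero with (RtoC 0); change plus with Cplus; change scal with Cmult;
    rewrite ?S_INR; simpl INR; apply injective_projections; simpl; field.
Qed.

Lemma derivs3_on_U_CPSeries (a : nat -> C) (s : C -> C) (M : R) (p : nat) :
  poly_bounded a M p -> (forall z, in_U z -> is_pseries a z (s z)) ->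
  derivs3_on_U s (CPSeries (CPS_derive a)) (CPSeries (CPS_derive (CPS_derive a)))
    (CPSeries (CPS_derive (CPS_derive (CPS_derive a)))).
Proof.
  intros Ha Hs z Hz.
  assert (B1 := poly_bounded_CPS_derive a M p Ha).
  assert (B2 := poly_bounded_CPS_derive _ _ _ B1).
  split; [| split]; [| exact (is_derive_CPSeries _ _ _ z B1 Hz)
                     | exact (is_derive_CPSeries _ _ _ z B2 Hz)].
  apply (is_derive_ext_loc (CPSeries a)); [| exact (is_derive_CPSeries a M p z Ha Hz)].
  assert (Hd : 0 < 1 - Cmod z) by (unfold in_U in Hz; lra).
  apply (@locally_norm_le_locally C_AbsRing (AbsRing_NormedModule C_AbsRing) z).
  exists (mkposreal _ Hd). intros w Hw.
  change (Cmod (w - z) < 1 - Cmod z) in Hw.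
  apply CPSeries_unique, Hs. unfold in_U.
  replace w with ((w - z) + z)%C by ring.
  eapply Rle_lt_trans; [apply Cmod_triangle | lra].
Qed.

Lemma Lweight_ge (gamma delta m : R) :
  0 <= gamma <= delta -> 1 <= m -> 2 * gamma <= Lweight gamma delta m.
Proof.
  intros Hg Hm. unfold Lweight.
  assert (1 <= m ^ 2) by nra.
  assert (0 <= (delta - gamma) * (m - 1)) by nra.
  nra.
Qed.

Lemma poly_bounded_of_weighted_series (gamma delta : R) (a : nat -> C) (c : nat -> R) (l : R) :
  0 < gamma <= delta -> Cmod (a 0%nat) <= 1 -> Cmod (a 1%nat) <= 1 ->
  (forall k, Cmod (a (k + 2)%nat) <= c k) ->
  is_series (fun k => Lweight gamma delta (INR (k + 2)) * c k) l ->
  poly_bounded a (1 + l / (2 * gamma)) 0.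
Proof.
  intros Hg Ha0 Ha1 Hac HS.
  assert (Hw : forall k, 2 * gamma <= Lweight gamma delta (INR (k + 2))).
  { intro k. apply Lweight_ge; [lra|]. rewrite plus_INR. simpl. generalize (pos_INR k). lra. }
  assert (Hc : forall k, 0 <= c k) by (intro k; exact (Rle_trans _ _ _ (Cmod_ge_0 _) (Hac k))).
  assert (Hnonneg : forall k, 0 <= Lweight gamma delta (INR (k + 2)) * c k).
  { intro k. apply Rmult_le_pos; [generalize (Hw k); lra | apply Hc]. }
  assert (Hterm := is_series_nonneg_term_le _ _ Hnonneg HS).
  assert (HSg : 0 <= l / (2 * gamma)).
  { apply Rdiv_le_0_compat; [exact (Rle_trans _ _ _ (Hnonneg O) (Hterm O)) | lra]. }
  intro n. rewrite pow_O, Rmult_1_r.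
  destruct n as [|[|k]]; [lra | lra |].
  replace (S (S k)) with (k + 2)%nat by lia.
  apply Rle_trans with (l / (2 * gamma)); [| lra].
  apply (Rmult_le_reg_l (2 * gamma)); [lra|].
  replace (2 * gamma * (l / (2 * gamma))) with l by (field; lra).
  eapply Rle_trans; [| apply (Hterm k)].
  apply Rmult_le_compat; [lra | apply Cmod_ge_0 | apply Hw | apply Hac].
Qed.

Lemma Re_ge_sub_Cmod (w : C) (x : R) : x - Cmod (w - x)%C <= Re w.
Proof.
  assert (E : Re (w - x)%C = Re w - x) by (unfold Re; simpl; ring).
  generalize (re_le_Cmod (w - x)%C). rewrite E. unfold Rabs. destruct Rcase_abs; lra.
Qed.

Lemma Lop_CPSeries_gap (gamma delta lambda : R) (a b : nat -> C) (M l : R) (z : C) :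
  0 <= lambda < gamma -> gamma <= delta -> a 1%nat = 1%C -> b 1%nat = 0%C ->
  poly_bounded a M 0 -> poly_bounded b M 0 ->
  is_series (fun k => Lweight gamma delta (INR (k + 2))
                      * (Cmod (a (k + 2)%nat) + Cmod (b (k + 2)%nat))) l ->
  l <= 2 * (gamma - lambda) -> Cmod z < 1 ->
  Re (Lop gamma delta (CPSeries (CPS_derive a)) (CPSeries (CPS_derive (CPS_derive a)))
        (CPSeries (CPS_derive (CPS_derive (CPS_derive a)))) z) - lambda
  > Cmod (Lop gamma delta (CPSeries (CPS_derive b)) (CPSeries (CPS_derive (CPS_derive b)))
        (CPSeries (CPS_derive (CPS_derive (CPS_derive b)))) z).
Proof.
  intros Hlg Hgd Ha1 Hb1 Ha Hb HS Hle Hz.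
  assert (Hw1 : Lweight gamma delta (INR 1) / 2 = gamma) by (unfold Lweight; simpl; field).
  assert (HA := is_series_tail_pseries _ _ _ (is_pseries_Lop gamma delta a M 0 z Ha Hz)).
  assert (HB := is_series_tail_pseries _ _ _ (is_pseries_Lop gamma delta b M 0 z Hb Hz)).
  cbv beta in HA, HB. rewrite Hw1, Ha1 in HA. rewrite Hw1, Hb1 in HB.
  set (LA := Lop gamma delta _ _ _ z) in HA |- *.
  set (LB := Lop gamma delta _ _ _ z) in HB |- *.
  assert (Hz0 := Cmod_ge_0 z).
  assert (Hgap : Cmod (LA - gamma * 1)%C + Cmod (LB - gamma * 0)%C <= Cmod z / 2 * l).
  { apply (is_series_norm_plus_le _ _ _ _ _ _ HA HB (is_series_scal_l (V := R_NormedModule) _ _ _ HS)).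
    intro k. change norm with Cmod. change (scal (Cmod z / 2) ?x) with (Cmod z / 2 * x).
    replace (k + 2)%nat with (S (S k)) by lia.
    assert (Hw := Lweight_ge gamma delta (INR (S (S k))) ltac:(lra) ltac:(rewrite !S_INR; generalize (pos_INR k); lra)).
    rewrite !Cmod_mult, Cmod_pow_n, Cmod_R, Rabs_pos_eq by lra.
    assert (Hzk : Cmod z ^ S k <= Cmod z).
    { rewrite <- tech_pow_Rmult. apply Rle_trans with (Cmod z * 1); [| lra].
      apply Rmult_le_compat_l; [lra | rewrite <- (pow1 k); apply pow_incr; lra]. }
    assert (0 <= Lweight gamma delta (INR (S (S k))) / 2
                 * (Cmod (a (S (S k))) + Cmod (b (S (S k))))).
    { apply Rmult_le_pos; [lra|]. generalize (Cmod_ge_0 (a (S (S k)))) (Cmod_ge_0 (b (S (S k)))). lra. }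
    nra. }
  replace (LA - gamma * 1)%C with (LA - gamma)%C in Hgap by ring.
  replace (LB - gamma * 0)%C with LB in Hgap by ring.
  assert (HRe := Re_ge_sub_Cmod LA gamma).
  assert (Cmod z * l < 2 * (gamma - lambda)).
  { assert (Cmod z * l <= Cmod z * (2 * (gamma - lambda))) by (apply Rmult_le_compat_l; lra).
    nra. }
  unfold Rgt. lra.
Qed.

Theorem theorem8 (gamma delta lambda : R) (a b : nat -> C) (s t : C -> C) :
  0 <= lambda -> lambda < gamma -> gamma <= delta ->
  normalized_s a s -> normalized_t b t ->
  (exists S : R,
     is_series (fun k : nat =>
        let m := INR (k + 2) in
        m ^ 2 * (2 * gamma + (delta - gamma) * (m - 1))
          * (Cmod (a (k + 2)%nat) + Cmod (b (k + 2)%nat))) S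
     /\ S <= 2 * (gamma - lambda)) ->
  in_RH0 gamma delta lambda s t.
Proof.
  intros Hl Hlg Hgd [Ha0 [Ha1 Hs]] [Hb0 [Hb1 Ht]] [l [Hsum Hle]].
  set (c := fun k => Cmod (a (k + 2)%nat) + Cmod (b (k + 2)%nat)).
  set (M := 1 + l / (2 * gamma)).
  assert (Ba : poly_bounded a M 0).
  { apply (poly_bounded_of_weighted_series gamma delta a c l); [lra | | | | exact Hsum].
    - rewrite Ha0, Cmod_0. lra.
    - rewrite Ha1, Cmod_1. lra.
    - intro k. unfold c. generalize (Cmod_ge_0 (b (k + 2)%nat)). lra. }
  assert (Bb : poly_bounded b M 0).
  { apply (poly_bounded_of_weighted_series gamma delta b c l); [lra | | | | exact Hsum].
    - rewrite Hb0, Cmod_0. lra.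
    - rewrite Hb1, Cmod_0. lra.
    - intro k. unfold c. generalize (Cmod_ge_0 (a (k + 2)%nat)). lra. }
  exists (CPSeries (CPS_derive a)), (CPSeries (CPS_derive (CPS_derive a))),
    (CPSeries (CPS_derive (CPS_derive (CPS_derive a)))),
    (CPSeries (CPS_derive b)), (CPSeries (CPS_derive (CPS_derive b))),
    (CPSeries (CPS_derive (CPS_derive (CPS_derive b)))).
  split; [exact (derivs3_on_U_CPSeries a s M 0 Ba Hs) |].
  split; [exact (derivs3_on_U_CPSeries b t M 0 Bb Ht) |].
  intros z Hz.
  exact (Lop_CPSeries_gap gamma delta lambda a b M l z (conj Hl Hlg) Hgd Ha1 Hb1 Ba Bb Hsum Hle Hz).
Qed.
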